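(* Let $\Delta$ be an irreducible reduced root system with positive roots $\Delta^+$ and simple roots $\Pi$, partially ordered by $\mu\preccurlyeq\nu$ iff $\nu-\mu$ is a non-negative integral linear combination of simple roots. 1) For any $\gamma\in\Delta^+$, the subposet $\{\nu\in\Delta^+\mid \nu\succcurlyeq\gamma\}$ is a modular lattice. 2) For $\gamma_1,\gamma_2\in\Delta^+$, the greatest lower bound $\gamma_1\wedge\gamma_2$ exists in $(\Delta^+,\preccurlyeq)$ if and only if $\mathrm{supp}(\gamma_1)\cap\mathrm{supp}(\gamma_2)\neq\varnothing$. In this case, writing $\gamma_i=\sum_{\alpha\in\Pi}c_{i\alpha}\alpha$, one has $\gamma_1\wedge\gamma_2=\sum_{\alpha\in\Pi}\min\{c_{1\alpha},c_{2\alpha}\}\alpha$.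
   Context: For $\mu=\sum_{\alpha\in\Pi}c_\alpha\alpha$, $\mathrm{supp}(\mu)=\{\alpha\in\Pi\mid c_\alpha\neq 0\}$. The greatest lower bound (meet) of $\gamma_1,\gamma_2$ is a positive root $\nu$ with $\nu\preccurlyeq\gamma_1,\gamma_2$ such that every positive root $\kappa$ with $\kappa\preccurlyeq\gamma_1,\gamma_2$ satisfies $\kappa\preccurlyeq\nu$. *)

From HB Require Import structures.
From mathcomp Require Import all_boot all_order all_algebra.
Set Implicit Arguments. Unset Strict Implicit. Unset Printing Implicit Defensive.
Import Order.TTheory GRing.Theory Num.Theory.
Local Open Scope ring_scope.

Section RootSystems.
Variables (R : realFieldType) (n : nat).
Local Notation V := 'rV[R]_n.

Definition dotp (u v : V) : R := \sum_(i < n) u 0 i * v 0 i.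

Definition cartan (b a : V) : R := 2 * dotp b a / dotp a a.

Definition refl (a b : V) : V := b - cartan b a *: a.

Definition reduced_root_system (Phi : seq V) : Prop :=
  [/\ 0 \notin Phi,
      (<<Phi>>%VS = fullv),
      (forall a b, a \in Phi -> b \in Phi -> refl a b \in Phi),
      (forall a b, a \in Phi -> b \in Phi -> exists z : int, cartan b a = z%:~R)
    & (forall a (c : R), a \in Phi -> c *: a \in Phi -> c = 1 \/ c = -1)].

Definition irreducible_rs (Phi : seq V) : Prop :=
  ~ exists P : pred V,
      [/\ exists2 a, a \in Phi & P a,
          exists2 b, b \in Phi & ~~ P b
        & forall a b, a \in Phi -> b \in Phi -> P a -> ~~ P b -> dotp a b = 0].

Definition irreducible_reduced_root_system (Phi : seq V) : Prop :=
  reduced_root_system Phi /\ irreducible_rs Phi.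

Definition is_base (Phi : seq V) (k : nat) (Pi : k.-tuple V) : Prop :=
  [/\ {subset Pi <= Phi}, free Pi &
      forall b, b \in Phi -> exists c : 'I_k -> nat,
        b = \sum_(i < k) (c i)%:R *: Pi`_i \/ b = - \sum_(i < k) (c i)%:R *: Pi`_i].

Definition rpreceq (k : nat) (Pi : k.-tuple V) (mu nu : V) : Prop :=
  exists c : 'I_k -> nat, nu - mu = \sum_(i < k) (c i)%:R *: Pi`_i.

Definition pos_root (Phi : seq V) (k : nat) (Pi : k.-tuple V) (b : V) : Prop :=
  b \in Phi /\ rpreceq Pi 0 b.

Definition rcoef (k : nat) (Pi : k.-tuple V) (mu : V) (i : 'I_k) : R := coord Pi i mu.

Definition rsupp (k : nat) (Pi : k.-tuple V) (mu : V) : {set 'I_k} :=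
  [set i | rcoef Pi mu i != 0].

End RootSystems.

Section Posets.
Variable T : Type.
Variables (S : T -> Prop) (le : T -> T -> Prop).

Definition is_meet (x y m : T) : Prop :=
  [/\ S m, le m x, le m y & forall z, S z -> le z x -> le z y -> le z m].

Definition is_join (x y j : T) : Prop :=
  [/\ S j, le x j, le y j & forall z, S z -> le x z -> le y z -> le j z].

Definition modular_lattice : Prop :=
  (forall x y, S x -> S y -> (exists m, is_meet x y m) /\ (exists j, is_join x y j)) /\
  (forall x y z m j1 j2 m2, S x -> S y -> S z -> le x z ->
     is_meet y z m -> is_join x m j1 -> is_join x y j2 -> is_meet j2 z m2 -> j1 = m2).

End Posets.

From HB Require Import structures.
From mathcomp Require Import all_boot all_order all_algebra.
From mathcomp Require Import ring lra zify.
Set Implicit Arguments. Unset Strict Implicit. Unset Printing Implicit Defensive.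
Import Order.TTheory GRing.Theory Num.Theory.
Local Open Scope ring_scope.

(* Positive roots are the combinations [comb c] of simple roots with natural
   coefficients [c], and [rpreceq] is the coordinatewise order on [c].  The heart
   of the proof is that if two positive roots [comb c1], [comb c2] share a simple
   root in their supports, then [comb (cmin c1 c2)] and [comb (cmax c1 c2)] are
   roots; they are then the meet and the join, and modularity (even
   distributivity) is inherited from [minn]/[maxn].
   Since [(a, b) > 0] forces [a - b] to be a root, distinct simple roots and
   incomparable positive roots have nonpositive inner products.  Writing
   [g1 = comb c1 = m + d1] and [g2 = comb c2 = m + d2] with
   [m = comb (cmin c1 c2)] and [d1], [d2] of disjoint supports, the identities
     [|m + d1 + d2|^2 = (g1,g2) + (g1,d1) + (g2,d2) + (d1,d2)] and
     [|m|^2 = (g1,g2) - (g1,d2) - (g2,d1) + (d1,d2)]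
   show that one of the roots can be moved by a simple root towards the other
   while staying a root and keeping the minimum (resp. the maximum, which needs
   [m <> 0]).  Induction on the l1-distance of the coefficients concludes. *)

Section Posets.
Variables (T : Type) (S : T -> Prop) (le : T -> T -> Prop).
Hypothesis le_anti : forall x y, le x y -> le y x -> x = y.

Lemma is_meet_uniq x y m m' : is_meet S le x y m -> is_meet S le x y m' -> m = m'.
Proof.
by case=> Sm mx my mG [Sm' m'x m'y m'G]; apply: le_anti; [apply: m'G | apply: mG].
Qed.

Lemma is_join_uniq x y j j' : is_join S le x y j -> is_join S le x y j' -> j = j'.
Proof.
by case=> Sj xj yj jL [Sj' xj' yj' j'L]; apply: le_anti; [apply: jL | apply: j'L].
Qed.

Lemma is_meet_sub (S' : T -> Prop) x y m :
  (forall z, S' z -> S z) -> S' m -> is_meet S le x y m -> is_meet S' le x y m.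
Proof. by move=> sub S'm [_ mx my mG]; split=> // z /sub; apply: mG. Qed.

Lemma is_join_sub (S' : T -> Prop) x y j :
  (forall z, S' z -> S z) -> S' j -> is_join S le x y j -> is_join S' le x y j.
Proof. by move=> sub S'j [_ xj yj jL]; split=> // z /sub; apply: jL. Qed.

Lemma modular_lattice_intro (meet join : T -> T -> T) :
  (forall x y, S x -> S y -> is_meet S le x y (meet x y)) ->
  (forall x y, S x -> S y -> is_join S le x y (join x y)) ->
  (forall x y z, S x -> S y -> S z -> le x z ->
     join x (meet y z) = meet (join x y) z) ->
  modular_lattice S le.
Proof.
move=> meetP joinP modular; split=> [x y Sx Sy|x y z m j1 j2 m2 Sx Sy Sz xz].
  by split; eexists; [apply: meetP | apply: joinP].
have Sm : S (meet y z) by case: (meetP y z Sy Sz).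
have Sj : S (join x y) by case: (joinP x y Sx Sy).
move=> /(is_meet_uniq (meetP y z Sy Sz)) <- /(is_join_uniq (joinP x _ Sx Sm)) <-.
move=> /(is_join_uniq (joinP x y Sx Sy)) <- /(is_meet_uniq (meetP _ z Sj Sz)) <-.
exact: modular.
Qed.

End Posets.

Section InnerProduct.
Variables (R : realFieldType) (n : nat).
Local Notation V := 'rV[R]_n.
Implicit Types u v w : V.

Lemma dotpC u v : dotp u v = dotp v u.
Proof. by apply: eq_bigr => i _; rewrite mulrC. Qed.

Lemma dotp0l v : dotp 0 v = 0.
Proof. by rewrite /dotp big1 // => i _; rewrite mxE mul0r. Qed.

Lemma dotpDl u w v : dotp (u + w) v = dotp u v + dotp w v.
Proof. by rewrite /dotp -big_split; apply: eq_bigr => i _; rewrite mxE mulrDl. Qed.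

Lemma dotpZl a u v : dotp (a *: u) v = a * dotp u v.
Proof. by rewrite /dotp mulr_sumr; apply: eq_bigr => i _; rewrite mxE mulrA. Qed.

Lemma dotpNl u v : dotp (- u) v = - dotp u v.
Proof. by rewrite -scaleN1r dotpZl mulN1r. Qed.

Lemma dotpBl u w v : dotp (u - w) v = dotp u v - dotp w v.
Proof. by rewrite dotpDl dotpNl. Qed.

Lemma dotpDr u v w : dotp u (v + w) = dotp u v + dotp u w.
Proof. by rewrite dotpC dotpDl !(dotpC u). Qed.

Lemma dotpZr a u v : dotp u (a *: v) = a * dotp u v.
Proof. by rewrite dotpC dotpZl dotpC. Qed.

Lemma dotpNr u v : dotp u (- v) = - dotp u v.
Proof. by rewrite dotpC dotpNl dotpC. Qed.

Lemma dotpBr u v w : dotp u (v - w) = dotp u v - dotp u w.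
Proof. by rewrite dotpC dotpBl !(dotpC u). Qed.

Lemma dotp_suml I (r : seq I) (P : pred I) (F : I -> V) v :
  dotp (\sum_(i <- r | P i) F i) v = \sum_(i <- r | P i) dotp (F i) v.
Proof. exact: (big_morph (fun u => dotp u v) (fun u w => dotpDl u w v) (dotp0l v)). Qed.

Lemma dotp_sumr I (r : seq I) (P : pred I) (F : I -> V) u :
  dotp u (\sum_(i <- r | P i) F i) = \sum_(i <- r | P i) dotp u (F i).
Proof. by rewrite dotpC dotp_suml; apply: eq_bigr => i _; rewrite dotpC. Qed.

Lemma dotp_ge0 v : 0 <= dotp v v.
Proof. by apply: sumr_ge0 => i _; rewrite -expr2 sqr_ge0. Qed.

Lemma dotp_le0 v : (dotp v v <= 0) = (v == 0).
Proof.
apply/idP/eqP=> [v_le0|->]; last by rewrite dotp0l.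
have sq_ge0 (i : 'I_n) : true -> 0 <= v 0 i * v 0 i by rewrite -expr2 sqr_ge0.
have /(psumr_eq0P sq_ge0) v0 : dotp v v = 0 by apply/le_anti; rewrite v_le0 dotp_ge0.
apply/rowP=> i; rewrite mxE; apply/eqP.
by rewrite -[_ == 0]orbb -mulf_eq0 v0.
Qed.

Lemma dotp_gt0 v : (0 < dotp v v) = (v != 0).
Proof. by rewrite ltNge dotp_le0. Qed.

Lemma dotp_expand_join v d1 d2 : dotp (v + d1 + d2) (v + d1 + d2) =
  dotp (v + d1) (v + d2) + dotp (v + d1) d1 + dotp (v + d2) d2 + dotp d1 d2.
Proof. by rewrite !(dotpDl, dotpDr) ?(dotpC d1 v) ?(dotpC d2 v) ?(dotpC d2 d1); ring. Qed.

Lemma dotp_expand_meet v d1 d2 : dotp v v =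
  dotp (v + d1) (v + d2) - dotp (v + d1) d2 - dotp (v + d2) d1 + dotp d1 d2.
Proof. by rewrite !(dotpDl, dotpDr) ?(dotpC d1 v) ?(dotpC d2 v) ?(dotpC d2 d1); ring. Qed.

Lemma dotp_proportional u v : v != 0 ->
  dotp u u * dotp v v <= dotp u v ^+ 2 -> u = (dotp u v / dotp v v) *: v.
Proof.
move=> v_neq0 CS; have v_gt0 : 0 < dotp v v by rewrite dotp_gt0.
apply/eqP; rewrite -subr_eq0 -dotp_le0.
rewrite !(dotpBl, dotpBr, dotpZl, dotpZr) (dotpC v u).
have -> : dotp u u - dotp u v / dotp v v * dotp u v -
    dotp u v / dotp v v * (dotp u v - dotp u v / dotp v v * dotp v v) =
    (dotp u u * dotp v v - dotp u v ^+ 2) / dotp v v.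
  by field; rewrite gt_eqF.
by rewrite pmulr_lle0 ?invr_gt0 // subr_le0.
Qed.

End InnerProduct.

Section RootSystem.
Variables (R : realFieldType) (n : nat) (Phi : seq 'rV[R]_n).
Hypothesis hRS : reduced_root_system Phi.

Lemma root_neq0 a : a \in Phi -> a != 0.
Proof. by case: hRS => Phi_n0 _ _ _ _; apply: contraTneq => ->. Qed.

Lemma rootN a : a \in Phi -> - a \in Phi.
Proof.
move=> Phi_a; case: hRS => _ _ reflP _ _; have := reflP a a Phi_a Phi_a.
have a_neq0 : dotp a a != 0 by rewrite gt_eqF // dotp_gt0 root_neq0.
by rewrite /refl /cartan -mulrA divff // mulr1 scaler_nat mulr2n opprD addNKr.
Qed.

Lemma cartan_mul_lt4 a b : a \in Phi -> b \in Phi -> 0 < dotp a b -> a != b ->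
  cartan b a * cartan a b < 4.
Proof.
move=> Phi_a Phi_b ab_gt0 neq_ab.
have a_gt0 : 0 < dotp a a by rewrite dotp_gt0 root_neq0.
have b_gt0 : 0 < dotp b b by rewrite dotp_gt0 root_neq0.
have -> : cartan b a * cartan a b = 4 * dotp a b ^+ 2 / (dotp a a * dotp b b).
  by rewrite /cartan (dotpC b a); field; rewrite !gt_eqF.
rewrite ltNge ler_pdivlMr ?mulr_gt0 //; apply/negP => ge4.
have CS : dotp a a * dotp b b <= dotp a b ^+ 2 by lra.
have t_gt0 : 0 < dotp a b / dotp b b by rewrite divr_gt0.
have ab := dotp_proportional (root_neq0 Phi_b) CS.
case: hRS => _ _ _ _ /(_ b (dotp a b / dotp b b) Phi_b).
rewrite -ab => /(_ Phi_a) [t1|tN1].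
  by move: neq_ab; rewrite ab t1 scale1r eqxx.
by move: t_gt0; rewrite tN1 ltr0N1.
Qed.

(* The Cartan integers of [a] and [b] are positive with product < 4, so one of
   them is 1 and the corresponding reflection is [a - b] or [b - a]. *)
Lemma root_subr a b : a \in Phi -> b \in Phi -> 0 < dotp a b -> a != b ->
  a - b \in Phi.
Proof.
move=> Phi_a Phi_b ab_gt0 neq_ab.
have a_gt0 : 0 < dotp a a by rewrite dotp_gt0 root_neq0.
have b_gt0 : 0 < dotp b b by rewrite dotp_gt0 root_neq0.
have prod_lt4 := cartan_mul_lt4 Phi_a Phi_b ab_gt0 neq_ab.
case: hRS => _ _ reflP cartanZ _.
have [z1 z1E] := cartanZ a b Phi_a Phi_b; have [z2 z2E] := cartanZ b a Phi_b Phi_a.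
have z1_gt0 : 0 < z1.
  by rewrite -(ltr0z R) -z1E /cartan dotpC divr_gt0 ?mulr_gt0.
have z2_gt0 : 0 < z2 by rewrite -(ltr0z R) -z2E /cartan divr_gt0 ?mulr_gt0.
have z12_lt4 : z1 * z2 < 4 by rewrite -(ltr_int R) intrM -z1E -z2E.
have [z1_1|z2_1] : z1 = 1 \/ z2 = 1 by lia.
- by have := rootN (reflP a b Phi_a Phi_b); rewrite /refl z1E z1_1 scale1r opprB.
- by have := reflP b a Phi_b Phi_a; rewrite /refl z2E z2_1 scale1r.
Qed.

Lemma root_addr a b : a \in Phi -> b \in Phi -> dotp a b < 0 -> a != - b ->
  a + b \in Phi.
Proof.
move=> Phi_a Phi_b ab_lt0 neq_ab; rewrite -[b]opprK.
by apply: root_subr; rewrite ?rootN ?dotpNr ?oppr_gt0.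
Qed.

End RootSystem.

Lemma leq_ltn_sum (I : finType) (F G : I -> nat) i :
  (forall j, F j <= G j)%N -> (F i < G i)%N -> (\sum_j F j < \sum_j G j)%N.
Proof.
move=> FG FG_i; rewrite (bigD1 i) //= [X in (_ < X)%N](bigD1 i) //=.
by rewrite -addSn leq_add // leq_sum.
Qed.

Section Base.
Variables (R : realFieldType) (n k : nat) (Phi : seq 'rV[R]_n) (Pi : k.-tuple 'rV[R]_n).
Hypotheses (hRS : reduced_root_system Phi) (hPi : is_base Phi Pi).
Local Notation V := 'rV[R]_n.
Implicit Types (c d : 'I_k -> nat) (i j : 'I_k) (u v : V).

Definition comb c : V := \sum_(i < k) (c i)%:R *: Pi`_i.
Definition delta (i : 'I_k) : 'I_k -> nat := fun j => j == i.
Definition cmin c d : 'I_k -> nat := fun i => minn (c i) (d i).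
Definition cmax c d : 'I_k -> nat := fun i => maxn (c i) (d i).
Definition cdiff c d : 'I_k -> nat := fun i => (c i - d i)%N.
Definition cdist c d := (\sum_(i < k) (c i - d i + (d i - c i)))%N.
Definition cle c d := [forall i, c i <= d i]%N.
Definition overlap c d := exists i, (0 < minn (c i) (d i))%N.

Lemma simple_root i : Pi`_i \in Phi.
Proof. by case: hPi => sub _ _; apply: sub; apply: mem_nth; rewrite size_tuple. Qed.

Lemma coord_comb c i : coord Pi i (comb c) = (c i)%:R.
Proof. by case: hPi => _ free_Pi _; apply: coord_sum_free. Qed.

Lemma comb_inj c d : comb c = comb d -> c =1 d.
Proof. by move=> cd i; apply/eqP; rewrite -(eqr_nat R) -!coord_comb cd. Qed.

Lemma eq_comb c d : c =1 d -> comb c = comb d.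
Proof. by move=> cd; apply: eq_bigr => i _; rewrite cd. Qed.

Lemma comb0 : comb (fun=> 0%N) = 0.
Proof. by rewrite /comb big1 // => i _; rewrite scale0r. Qed.

Lemma combD c d : comb (fun i => c i + d i)%N = comb c + comb d.
Proof. by rewrite /comb -big_split; apply: eq_bigr => i _; rewrite natrD scalerDl. Qed.

Lemma comb_delta i : comb (delta i) = Pi`_i.
Proof.
rewrite /comb (bigD1 i) //= /delta eqxx scale1r big1 ?addr0 // => j /negPf ->.
by rewrite scale0r.
Qed.

Lemma comb_add_eq0 c d : comb c + comb d = 0 -> c =1 (fun=> 0%N).
Proof.
move=> /(congr1 (coord Pi _)) cd0 i; have /eqP := cd0 i.
by rewrite linearD /= !coord_comb linear0 -natrD pnatr_eq0 addn_eq0 => /andP[/eqP].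
Qed.

Lemma root_comb b : b \in Phi -> exists c, b = comb c \/ b = - comb c.
Proof. by case: hPi => _ _ combP /combP. Qed.

Lemma comb_root_pos c : comb c \in Phi -> exists i, (0 < c i)%N.
Proof.
move=> Phi_c; case: (pickP (fun i => 0 < c i)%N) => [i|c0]; first by exists i.
have : comb c = 0.
  by rewrite -comb0; apply: eq_comb => i; apply/eqP; rewrite -leqn0 leqNgt c0.
by move/eqP: (root_neq0 hRS Phi_c).
Qed.

Lemma pos_rootP b : pos_root Phi Pi b <-> exists2 c, b = comb c & comb c \in Phi.
Proof.
split=> [[Phi_b [c]]|[c -> Phi_c]]; last by split=> //; exists c; rewrite subr0.
by rewrite subr0 => bE; change (b = comb c) in bE; exists c; rewrite -?bE.
Qed.

Lemma rpreceq_comb c d : rpreceq Pi (comb c) (comb d) <-> cle c d.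
Proof.
split=> [[e de]|/forallP cd].
  change (comb d - comb c = comb e) in de; apply/forallP => i.
  have /comb_inj -> : comb d = comb (fun i => c i + e i)%N.
    by rewrite combD -de addrC subrK.
  exact: leq_addr.
exists (cdiff d c); change (comb d - comb c = comb (cdiff d c)).
apply/eqP; rewrite subr_eq -combD; apply/eqP/eq_comb => i.
by have := cd i; rewrite /cdiff; lia.
Qed.

Lemma rpreceq_anti u v : rpreceq Pi u v -> rpreceq Pi v u -> u = v.
Proof.
move=> [c uv] [d vu]; change (v - u = comb c) in uv; change (u - v = comb d) in vu.
have /comb_add_eq0/eq_comb c0 : comb c + comb d = 0 by rewrite -uv -vu addrA subrK subrr.
by apply/esym/subr0_eq; rewrite uv c0 comb0.
Qed.

Lemma dotp_le0_incomparable c d : comb c \in Phi -> comb d \in Phi ->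
  ~~ cle c d -> ~~ cle d c -> dotp (comb c) (comb d) <= 0.
Proof.
move=> Phi_c Phi_d ncd ndc; rewrite leNgt; apply/negP => cd_gt0.
have neq_cd : comb c != comb d.
  by apply: contra ncd => /eqP/comb_inj cd; apply/forallP => i; rewrite cd.
have [e [eE|eE]] := root_comb (root_subr hRS Phi_c Phi_d cd_gt0 neq_cd).
  by move/negP: ndc; apply; apply/rpreceq_comb; exists e.
by move/negP: ncd; apply; apply/rpreceq_comb; exists e; rewrite -opprB eE opprK.
Qed.

Lemma simple_dotp_le0 i j : i != j -> dotp Pi`_i Pi`_j <= 0.
Proof.
move=> ij; rewrite -!comb_delta.
apply: dotp_le0_incomparable; rewrite ?comb_delta ?simple_root //; apply/forallPn.
  by exists i; rewrite /delta eqxx (negPf ij).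
by exists j; rewrite /delta eqxx eq_sym (negPf ij).
Qed.

Lemma dotp_comb_le0 u c :
  (forall i, (0 < c i)%N -> dotp u Pi`_i <= 0) -> dotp u (comb c) <= 0.
Proof.
move=> uc; rewrite dotp_sumr; apply: sumr_le0 => i _; rewrite dotpZr.
by have [->|/uc] := posnP (c i); [rewrite mul0r | apply: mulr_ge0_le0].
Qed.

Lemma dotp_comb_ge0 u c :
  (forall i, (0 < c i)%N -> 0 <= dotp u Pi`_i) -> 0 <= dotp u (comb c).
Proof.
move=> uc; rewrite dotp_sumr; apply: sumr_ge0 => i _; rewrite dotpZr.
by have [->|/uc] := posnP (c i); [rewrite mul0r | apply: mulr_ge0].
Qed.

Lemma dotp_comb_disjoint c d :
  (forall i, 0 < c i -> d i = 0)%N -> dotp (comb c) (comb d) <= 0.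
Proof.
move=> cd; rewrite dotp_suml; apply: sumr_le0 => i _; rewrite dotpZl.
have [->|/cd d_i0] := posnP (c i); first by rewrite mul0r.
apply: mulr_ge0_le0 => //; apply: dotp_comb_le0 => j d_j.
by apply: simple_dotp_le0; apply: contraTneq d_j => <-; rewrite d_i0.
Qed.

Lemma comb_cmin_cdiffl c d : comb c = comb (cmin c d) + comb (cdiff c d).
Proof. by rewrite -combD; apply: eq_comb => i; rewrite /cmin /cdiff; lia. Qed.

Lemma comb_cmin_cdiffr c d : comb d = comb (cmin c d) + comb (cdiff d c).
Proof. by rewrite -combD; apply: eq_comb => i; rewrite /cmin /cdiff; lia. Qed.

Lemma comb_cmax c d :
  comb (cmax c d) = comb (cmin c d) + comb (cdiff c d) + comb (cdiff d c).
Proof. by rewrite -!combD; apply: eq_comb => i; rewrite /cmax /cmin /cdiff; lia. Qed.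

(* If neither root can be lowered by a simple root towards the other, then
   [|cmax c1 c2|^2 <= 0]. *)
Lemma descent_index c1 c2 : comb c1 \in Phi -> comb c2 \in Phi ->
  ~~ cle c1 c2 -> ~~ cle c2 c1 ->
  (exists2 i, (c2 i < c1 i)%N & 0 < dotp (comb c1) Pi`_i) \/
  (exists2 i, (c1 i < c2 i)%N & 0 < dotp (comb c2) Pi`_i).
Proof.
move=> Phi1 Phi2 n12 n21.
case: (pickP (fun i => (c2 i < c1 i)%N && (0 < dotp (comb c1) Pi`_i))).
  by move=> i /andP[]; left; exists i.
case: (pickP (fun i => (c1 i < c2 i)%N && (0 < dotp (comb c2) Pi`_i))).
  by move=> i /andP[]; right; exists i.
move=> stuck2 stuck1; exfalso.
have le1 : dotp (comb c1) (comb (cdiff c1 c2)) <= 0.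
  apply: dotp_comb_le0 => i; rewrite subn_gt0 => lt_i.
  by rewrite leNgt; apply: contraFN (stuck1 i) => ->; rewrite lt_i.
have le2 : dotp (comb c2) (comb (cdiff c2 c1)) <= 0.
  apply: dotp_comb_le0 => i; rewrite subn_gt0 => lt_i.
  by rewrite leNgt; apply: contraFN (stuck2 i) => ->; rewrite lt_i.
have le12 := dotp_le0_incomparable Phi1 Phi2 n12 n21.
have le_diff : dotp (comb (cdiff c1 c2)) (comb (cdiff c2 c1)) <= 0.
  by apply: dotp_comb_disjoint => i; rewrite /cdiff; lia.
have [l c1_l] := comb_root_pos Phi1.
have /comb_inj/(_ l) : comb (cmax c1 c2) = comb (fun=> 0%N).
  apply/eqP; rewrite comb0 -dotp_le0 comb_cmax dotp_expand_join.
  by rewrite -comb_cmin_cdiffl -comb_cmin_cdiffr; lra.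
by rewrite /cmax; lia.
Qed.

(* If neither root can be raised by a simple root towards the other, then
   [|cmin c1 c2|^2 <= 0]. *)
Lemma ascent_index c1 c2 : comb c1 \in Phi -> comb c2 \in Phi ->
  ~~ cle c1 c2 -> ~~ cle c2 c1 -> overlap c1 c2 ->
  (exists2 i, (c1 i < c2 i)%N & dotp (comb c1) Pi`_i < 0) \/
  (exists2 i, (c2 i < c1 i)%N & dotp (comb c2) Pi`_i < 0).
Proof.
move=> Phi1 Phi2 n12 n21 [l ov_l].
case: (pickP (fun i => (c1 i < c2 i)%N && (dotp (comb c1) Pi`_i < 0))).
  by move=> i /andP[]; left; exists i.
case: (pickP (fun i => (c2 i < c1 i)%N && (dotp (comb c2) Pi`_i < 0))).
  by move=> i /andP[]; right; exists i.
move=> stuck2 stuck1; exfalso.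
have ge1 : 0 <= dotp (comb c1) (comb (cdiff c2 c1)).
  apply: dotp_comb_ge0 => i; rewrite subn_gt0 => lt_i.
  by rewrite leNgt; apply: contraFN (stuck1 i) => ->; rewrite lt_i.
have ge2 : 0 <= dotp (comb c2) (comb (cdiff c1 c2)).
  apply: dotp_comb_ge0 => i; rewrite subn_gt0 => lt_i.
  by rewrite leNgt; apply: contraFN (stuck2 i) => ->; rewrite lt_i.
have le12 := dotp_le0_incomparable Phi1 Phi2 n12 n21.
have le_diff : dotp (comb (cdiff c1 c2)) (comb (cdiff c2 c1)) <= 0.
  by apply: dotp_comb_disjoint => i; rewrite /cdiff; lia.
have /comb_inj/(_ l) : comb (cmin c1 c2) = comb (fun=> 0%N).
  apply/eqP; rewrite comb0 -dotp_le0.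
  rewrite (dotp_expand_meet _ (comb (cdiff c1 c2)) (comb (cdiff c2 c1))).
  by rewrite -comb_cmin_cdiffl -comb_cmin_cdiffr; lra.
by rewrite /cmin; lia.
Qed.

Lemma meet_step c1 c2 i : comb c1 \in Phi -> (c2 i < c1 i)%N ->
  0 < dotp (comb c1) Pi`_i -> overlap c1 c2 ->
  exists c1', [/\ comb c1' \in Phi, (cdist c1' c2 < cdist c1 c2)%N &
                  cmin c1' c2 =1 cmin c1 c2].
Proof.
move=> Phi1 lt_i pos [l ov_l]; exists (cdiff c1 (delta i)).
have c1E : comb c1 = comb (cdiff c1 (delta i)) + Pi`_i.
  rewrite -comb_delta -combD; apply: eq_comb => j.
  by rewrite /cdiff /delta; case: eqP => [->|] /=; lia.
have neq : comb c1 != Pi`_i.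
  rewrite -comb_delta; apply/eqP => /comb_inj c1_delta.
  move: (c1_delta l) (c1_delta i) ov_l lt_i; rewrite /delta eqxx.
  by case: eqP => [->|] /=; lia.
split.
- by have := root_subr hRS Phi1 (simple_root i) pos neq; rewrite c1E addrK.
- apply: (leq_ltn_sum (i := i)) => [j|]; rewrite /cdiff /delta ?eqxx //=; last by lia.
  by case: eqP => [->|] /=; lia.
- by move=> j; rewrite /cmin /cdiff /delta; case: eqP => [->|] /=; lia.
Qed.

Lemma join_step c1 c2 i : comb c1 \in Phi -> (c1 i < c2 i)%N ->
  dotp (comb c1) Pi`_i < 0 ->
  exists c1', [/\ comb c1' \in Phi, (cdist c1' c2 < cdist c1 c2)%N,
                  cmax c1' c2 =1 cmax c1 c2 &
                  forall j, (cmin c1 c2 j <= cmin c1' c2 j)%N].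
Proof.
move=> Phi1 lt_i neg; exists (fun j => c1 j + delta i j)%N.
have neq : comb c1 != - Pi`_i.
  apply/eqP => c1E; have := @comb_add_eq0 (delta i) c1.
  by rewrite comb_delta c1E subrr => /(_ erefl i); rewrite /delta eqxx.
split.
- by rewrite combD comb_delta; apply: root_addr; rewrite ?simple_root.
- apply: (leq_ltn_sum (i := i)) => [j|]; rewrite /delta ?eqxx //=; last by lia.
  by case: eqP => [->|] /=; lia.
- by move=> j; rewrite /cmax /delta; case: eqP => [->|] /=; lia.
- by move=> j; rewrite /cmin; lia.
Qed.

Lemma cdistC c d : cdist c d = cdist d c.
Proof. by apply: eq_bigr => i _; rewrite addnC. Qed.

Lemma meet_descent c1 c2 : comb c1 \in Phi -> comb c2 \in Phi ->
  ~~ cle c1 c2 -> ~~ cle c2 c1 -> overlap c1 c2 ->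
  exists c1' c2', [/\ comb c1' \in Phi, comb c2' \in Phi,
     (cdist c1' c2' < cdist c1 c2)%N & cmin c1' c2' =1 cmin c1 c2].
Proof.
move=> Phi1 Phi2 n12 n21 ov.
have [[i lt_i pos]|[i lt_i pos]] := descent_index Phi1 Phi2 n12 n21.
  by have [c1' []] := meet_step Phi1 lt_i pos ov; exists c1', c2.
have ov' : overlap c2 c1 by case: ov => l; exists l; rewrite minnC.
have [c2' [Phi2' lt_dist minE]] := meet_step Phi2 lt_i pos ov'.
exists c1, c2'; split; rewrite ?(cdistC c1) //.
by move=> j; have := minE j; rewrite /cmin; lia.
Qed.

Lemma join_descent c1 c2 : comb c1 \in Phi -> comb c2 \in Phi ->
  ~~ cle c1 c2 -> ~~ cle c2 c1 -> overlap c1 c2 ->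
  exists c1' c2', [/\ comb c1' \in Phi, comb c2' \in Phi,
     (cdist c1' c2' < cdist c1 c2)%N, cmax c1' c2' =1 cmax c1 c2 & overlap c1' c2'].
Proof.
move=> Phi1 Phi2 n12 n21 ov; have [l ov_l] := ov.
have [[i lt_i neg]|[i lt_i neg]] := ascent_index Phi1 Phi2 n12 n21 ov.
  have [c1' [Phi1' lt_dist maxE minI]] := join_step Phi1 lt_i neg.
  by exists c1', c2; split=> //; exists l; apply: leq_trans (minI l).
have [c2' [Phi2' lt_dist maxE minI]] := join_step Phi2 lt_i neg.
exists c1, c2'; split; rewrite ?(cdistC c1) //.
  by move=> j; have := maxE j; rewrite /cmax; lia.
by exists l; have := minI l; rewrite /cmin; lia.
Qed.

Lemma cmin_cle c d : cle c d -> cmin c d =1 c /\ cmin d c =1 c.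
Proof. by move/forallP=> cd; split=> i; have := cd i; rewrite /cmin; lia. Qed.

Lemma cmax_cle c d : cle c d -> cmax c d =1 d /\ cmax d c =1 d.
Proof. by move/forallP=> cd; split=> i; have := cd i; rewrite /cmax; lia. Qed.

Lemma root_cmin c1 c2 : comb c1 \in Phi -> comb c2 \in Phi -> overlap c1 c2 ->
  comb (cmin c1 c2) \in Phi.
Proof.
have [N] := ubnP (cdist c1 c2); elim: N c1 c2 => // N IH c1 c2 lt_N Phi1 Phi2 ov.
have [/cmin_cle[/eq_comb -> _] //|n12] := boolP (cle c1 c2).
have [/cmin_cle[_ /eq_comb ->] //|n21] := boolP (cle c2 c1).
have [c1' [c2' [Phi1' Phi2' lt_dist minE]]] := meet_descent Phi1 Phi2 n12 n21 ov.
rewrite -(eq_comb minE); apply: IH => //; first exact: leq_trans lt_dist _.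
by case: ov => l; exists l; have := minE l; rewrite /cmin => ->.
Qed.

Lemma root_cmax c1 c2 : comb c1 \in Phi -> comb c2 \in Phi -> overlap c1 c2 ->
  comb (cmax c1 c2) \in Phi.
Proof.
have [N] := ubnP (cdist c1 c2); elim: N c1 c2 => // N IH c1 c2 lt_N Phi1 Phi2 ov.
have [/cmax_cle[/eq_comb -> _] //|n12] := boolP (cle c1 c2).
have [/cmax_cle[_ /eq_comb ->] //|n21] := boolP (cle c2 c1).
have [c1' [c2' [Phi1' Phi2' lt_dist maxE ov']]] := join_descent Phi1 Phi2 n12 n21 ov.
by rewrite -(eq_comb maxE); apply: IH => //; exact: leq_trans lt_dist _.
Qed.

Lemma is_meet_comb c1 c2 : comb c1 \in Phi -> comb c2 \in Phi -> overlap c1 c2 ->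
  is_meet (pos_root Phi Pi) (rpreceq Pi) (comb c1) (comb c2) (comb (cmin c1 c2)).
Proof.
move=> Phi1 Phi2 ov; split.
- by apply/pos_rootP; exists (cmin c1 c2); rewrite ?root_cmin.
- by apply/rpreceq_comb/forallP => i; rewrite geq_minl.
- by apply/rpreceq_comb/forallP => i; rewrite geq_minr.
- move=> _ /pos_rootP[c -> _] /rpreceq_comb/forallP c1c /rpreceq_comb/forallP c2c.
  by apply/rpreceq_comb/forallP => i; rewrite leq_min c1c c2c.
Qed.

Lemma is_join_comb c1 c2 : comb c1 \in Phi -> comb c2 \in Phi -> overlap c1 c2 ->
  is_join (pos_root Phi Pi) (rpreceq Pi) (comb c1) (comb c2) (comb (cmax c1 c2)).
Proof.
move=> Phi1 Phi2 ov; split.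
- by apply/pos_rootP; exists (cmax c1 c2); rewrite ?root_cmax.
- by apply/rpreceq_comb/forallP => i; rewrite leq_maxl.
- by apply/rpreceq_comb/forallP => i; rewrite leq_maxr.
- move=> _ /pos_rootP[c -> _] /rpreceq_comb/forallP c1c /rpreceq_comb/forallP c2c.
  by apply/rpreceq_comb/forallP => i; rewrite geq_max c1c c2c.
Qed.

Definition up_set g : V -> Prop := fun nu => pos_root Phi Pi nu /\ rpreceq Pi g nu.

Definition coordmin u v : V :=
  \sum_(i < k) Num.min (rcoef Pi u i) (rcoef Pi v i) *: Pi`_i.
Definition coordmax u v : V :=
  \sum_(i < k) Num.max (rcoef Pi u i) (rcoef Pi v i) *: Pi`_i.

Lemma coordmin_comb c d : coordmin (comb c) (comb d) = comb (cmin c d).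
Proof. by apply: eq_bigr => i _; rewrite /rcoef !coord_comb -natr_min. Qed.

Lemma coordmax_comb c d : coordmax (comb c) (comb d) = comb (cmax c d).
Proof. by apply: eq_bigr => i _; rewrite /rcoef !coord_comb -natr_max. Qed.

Lemma up_set_modular g : pos_root Phi Pi g -> modular_lattice (up_set g) (rpreceq Pi).
Proof.
case/pos_rootP => cg -> Phi_g; have [l cg_l] := comb_root_pos Phi_g.
have up_setP c : comb c \in Phi -> (forall i, cg i <= c i)%N -> up_set (comb cg) (comb c).
  by move=> Phi_c cgc; split; [apply/pos_rootP; exists c | apply/rpreceq_comb/forallP].
have ov c1 c2 : (forall i, cg i <= c1 i)%N -> (forall i, cg i <= c2 i)%N -> overlap c1 c2.
  move=> g1 g2; exists l.
  by rewrite leq_min (leq_trans cg_l (g1 l)) (leq_trans cg_l (g2 l)).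
apply: (modular_lattice_intro (@rpreceq_anti) (meet := coordmin) (join := coordmax)).
- move=> x y [/pos_rootP[c1 -> Phi1] /rpreceq_comb/forallP g1].
  move=> [/pos_rootP[c2 -> Phi2] /rpreceq_comb/forallP g2].
  rewrite coordmin_comb; apply: is_meet_sub (is_meet_comb Phi1 Phi2 (ov _ _ g1 g2)).
    by move=> z [].
  apply: up_setP => [|i]; first exact: root_cmin Phi1 Phi2 (ov _ _ g1 g2).
  by rewrite leq_min g1 g2.
- move=> x y [/pos_rootP[c1 -> Phi1] /rpreceq_comb/forallP g1].
  move=> [/pos_rootP[c2 -> Phi2] /rpreceq_comb/forallP g2].
  rewrite coordmax_comb; apply: is_join_sub (is_join_comb Phi1 Phi2 (ov _ _ g1 g2)).
    by move=> z [].
  apply: up_setP => [|i]; first exact: root_cmax Phi1 Phi2 (ov _ _ g1 g2).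
  by rewrite leq_max g1.
- move=> _ _ _ [/pos_rootP[c1 -> _] _] [/pos_rootP[c2 -> _] _] [/pos_rootP[c3 -> _] _].
  move=> /rpreceq_comb/forallP c13; rewrite !(coordmin_comb, coordmax_comb).
  by apply: eq_comb => i; have := c13 i; rewrite /cmin /cmax; lia.
Qed.

Lemma overlap_rsupp c d :
  overlap c d <-> rsupp Pi (comb c) :&: rsupp Pi (comb d) != set0.
Proof.
split=> [[i cd_i]|/set0Pn[i]]; last first.
  by rewrite !inE /rcoef !coord_comb !pnatr_eq0 -!lt0n -leq_min; exists i.
by apply/set0Pn; exists i; rewrite !inE /rcoef !coord_comb !pnatr_eq0 -!lt0n -leq_min.
Qed.

Lemma exists_meet_overlap g1 g2 : pos_root Phi Pi g1 -> pos_root Phi Pi g2 ->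
  (exists nu, is_meet (pos_root Phi Pi) (rpreceq Pi) g1 g2 nu) <->
  rsupp Pi g1 :&: rsupp Pi g2 != set0.
Proof.
move=> /pos_rootP[c1 -> Phi1] /pos_rootP[c2 -> Phi2].
split=> [[_ [/pos_rootP[c -> Phi_c]]]|].
  move=> /rpreceq_comb/forallP c1c /rpreceq_comb/forallP c2c _.
  apply/overlap_rsupp; have [l c_l] := comb_root_pos Phi_c.
  by exists l; rewrite leq_min (leq_trans c_l (c1c l)) (leq_trans c_l (c2c l)).
by move/overlap_rsupp => ov; exists (comb (cmin c1 c2)); apply: is_meet_comb.
Qed.

Lemma is_meet_coordmin g1 g2 : pos_root Phi Pi g1 -> pos_root Phi Pi g2 ->
  rsupp Pi g1 :&: rsupp Pi g2 != set0 ->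
  is_meet (pos_root Phi Pi) (rpreceq Pi) g1 g2 (coordmin g1 g2).
Proof.
move=> /pos_rootP[c1 -> Phi1] /pos_rootP[c2 -> Phi2] /overlap_rsupp ov.
by rewrite coordmin_comb; apply: is_meet_comb.
Qed.

End Base.

Theorem theorem2p5 (R : realFieldType) (n k : nat) (Phi : seq 'rV[R]_n)
    (Pi : k.-tuple 'rV[R]_n)
    (hPhi : irreducible_reduced_root_system Phi) (hPi : is_base Phi Pi) :
  (forall gamma, pos_root Phi Pi gamma ->
     modular_lattice (fun nu => pos_root Phi Pi nu /\ rpreceq Pi gamma nu)
                     (rpreceq Pi)) /\
  (forall gamma1 gamma2, pos_root Phi Pi gamma1 -> pos_root Phi Pi gamma2 ->
     ((exists nu, is_meet (pos_root Phi Pi) (rpreceq Pi) gamma1 gamma2 nu) <->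
        rsupp Pi gamma1 :&: rsupp Pi gamma2 != set0) /\
     (rsupp Pi gamma1 :&: rsupp Pi gamma2 != set0 ->
        is_meet (pos_root Phi Pi) (rpreceq Pi) gamma1 gamma2
          (\sum_(i < k) Num.min (rcoef Pi gamma1 i) (rcoef Pi gamma2 i) *: Pi`_i))).
Proof.
have [hRS _] := hPhi.
split=> [gamma|g1 g2 pos1 pos2]; first exact: up_set_modular.
by split; [exact: exists_meet_overlap | exact: is_meet_coordmin].
Qed.
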